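(* Let $S$ be a string of length $n$ over a totally ordered alphabet, let $i\in[1,n]$ and $j=\mathrm{nss}[i]\ne n+1$. If $\mathrm{llce}(i,j)> j-i$, then $\mathrm{llce}(i-(j-i),i)=\mathrm{llce}(i,j)-(j-i)$ and $\mathrm{nss}[i-(j-i)]=i$.
   Context: For $i\in[1,n+1]$, $S_i=S[i..n]$ ($S_{n+1}$ empty); $\prec$ is the induced lexicographical order. $\mathrm{nss}[i]=\min\{j \mid j=n+1 \text{ or } (j\in(i,n] \text{ and } S_i\succ S_j)\}$ for $i\in[1,n]$. $\mathrm{llce}(a,b)$ is the length of the longest common suffix of the prefixes $S[1..a]$ and $S[1..b]$. *)

From mathcomp Require Import all_boot all_order.
Set Implicit Arguments. Unset Strict Implicit. Unset Printing Implicit Defensive.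
Import Order.TTheory.
Local Open Scope order_scope.

(* Strings are sequences S : seq T over a totally ordered alphabet T.
   Positions are 1-based: S[p] is the p-th letter, p in [1, size S]. *)
Section Strings.
Context {d : Order.disp_t} {T : orderType d}.

Definition suf (S : seq T) (i : nat) : seqlexi T := drop i.-1 S.

(* S_i \succ S_j in the (library) lexicographic order on sequences,
   where a proper prefix is smaller. *)
Definition suf_gt (S : seq T) (i j : nat) : bool := suf S j < suf S i.

(* nss[i] = min { j | j = n+1 or (j in (i, n] and S_i \succ S_j) }:
   the first j = i+1, i+2, ..., n with S_i \succ S_j, or n+1 if none. *)
Definition nss (S : seq T) (i : nat) : nat :=
  i.+1 + find (fun k => suf_gt S i (i.+1 + k)) (iota 0 (size S - i)).

Fixpoint lcp (s t : seq T) : nat :=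
  match s, t with
  | x :: s', y :: t' => if x == y then (lcp s' t').+1 else 0
  | _, _ => 0
  end.

(* llce(a,b) = length of the longest common suffix of S[1..a] and S[1..b] *)
Definition llce (S : seq T) (a b : nat) : nat :=
  lcp (rev (take a S)) (rev (take b S)).

End Strings.

From mathcomp Require Import all_boot all_order zify.
Set Implicit Arguments. Unset Strict Implicit. Unset Printing Implicit Defensive.
Import Order.TTheory.

(* Write j = nss[i], d = j - i and i' = i - d.  Since llce(i,j) > d, the
   block u = S[i'..i-1] reappears as S[i..j-1], so S_i' = u u S_j and
   S_i = u S_j.  Cutting the common suffix S[i'+1..i] = S[i+1..j] off
   S[1..i] and S[1..j] gives llce(i,j) = d + llce(i',i).  For the second
   claim, "the next smaller suffix of u t starts at offset |u|" transfers
   to u u t.  Take a suffix v u t of u u t with 0 < |v| < |u|, and let w be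
   the prefix of u of length |v|, u = w w'.  By minimality v t >= u t.  If
   v = w this says w' t <= t < u t, contradicting minimality again; so
   v > w, and then v u t > w w' u t = u u t. *)

Section Lexicographic.
Context {disp : Order.disp_t} {T : orderType disp}.
Implicit Types u v w s t : seq T.

Lemma lexi_cat2l u s t : (u ++ s <= u ++ t :> seqlexi T)%O = (s <= t :> seqlexi T)%O.
Proof. by elim: u => //= x u IHu; rewrite eqhead_lexiE. Qed.

Lemma ltxi_cat2l u s t : (u ++ s < u ++ t :> seqlexi T)%O = (s < t :> seqlexi T)%O.
Proof. by rewrite !ltNge lexi_cat2l. Qed.

Lemma lexi_cat_size v w s t : size v = size w -> v != w ->
  (v ++ s <= w ++ t :> seqlexi T)%O = (v <= w :> seqlexi T)%O.
Proof.
elim: v w => [|x v IHv] [|y w] //= [size_vw] neq_vw.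
have [eq_xy|neq_xy] := eqVneq x y.
  subst y; rewrite !eqhead_lexiE IHv //.
  by apply: contra_neq neq_vw => ->.
by rewrite !lexi_cons; case: ltgtP neq_xy.
Qed.

Definition next_smaller_suffix s (d : nat) : Prop :=
  (drop d s < s :> seqlexi T)%O /\ forall g, 0 < g < d -> (s <= drop g s :> seqlexi T)%O.

Lemma next_smaller_suffix_square u t :
  next_smaller_suffix (u ++ t) (size u) -> next_smaller_suffix (u ++ u ++ t) (size u).
Proof.
rewrite /next_smaller_suffix !drop_size_cat // => -[lt_t_ut min_ut].
split; first by rewrite ltxi_cat2l.
move=> g g_range; have /andP[g_gt0 g_lt] := g_range; set h := size u - g.
have dropg x : drop g (u ++ x) = drop g u ++ x by rewrite drop_cat g_lt.
have Eu : u = take h u ++ drop h u by rewrite cat_take_drop.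
have size_w : size (take h u) = size (drop g u) by rewrite size_drop size_takel ?leq_subr.
have := min_ut g g_range; rewrite dropg => le_ut_vt.
have neq_wv : take h u != drop g u.
  apply/eqP => Ewv.
  have le_t : (drop h u ++ t <= t :> seqlexi T)%O.
    by move: le_ut_vt; rewrite {1}Eu -catA -Ewv lexi_cat2l.
  have := min_ut h ltac:(lia); rewrite drop_cat ifT; last by lia.
  by move=> /le_trans /(_ le_t); rewrite leNgt lt_t_ut.
rewrite dropg {1}Eu -catA lexi_cat_size //.
by rewrite -(lexi_cat_size (drop h u ++ t) t size_w neq_wv) catA -Eu.
Qed.

End Lexicographic.

Section LongestCommonPrefix.
Context {disp : Order.disp_t} {T : orderType disp}.
Implicit Types u s t : seq T.

Lemma lcp_cat2l u s t : lcp (u ++ s) (u ++ t) = size u + lcp s t.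
Proof. by elim: u => //= x u ->; rewrite eqxx. Qed.

Lemma lcp_leq_size s t : lcp s t <= minn (size s) (size t).
Proof.
elim: s t => [|x s IHs] [|y t] //=; case: eqP => // _.
by rewrite minnSS ltnS.
Qed.

Lemma take_lcp s t k : k <= lcp s t -> take k s = take k t.
Proof.
elim: s t k => [|x s IHs] [|y t] [|k] //=; case: eqP => // <- le_k.
by rewrite (IHs t).
Qed.

Lemma llce_leq (S : seq T) a b : a <= size S -> b <= size S ->
  llce S a b <= minn a b.
Proof.
by move=> le_a le_b; have := lcp_leq_size (rev (take a S)) (rev (take b S));
  rewrite !size_rev !size_takel.
Qed.

Lemma llce_common_block (S : seq T) a b k : a <= size S -> b <= size S ->
  k <= llce S a b -> take k (drop (a - k) S) = take k (drop (b - k) S).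
Proof.
move=> le_a le_b le_k; have := llce_leq le_a le_b; rewrite leq_min => /andP[ka kb].
have := take_lcp le_k; rewrite !take_rev !size_takel //.
by move/(inv_inj revK); rewrite !take_drop !subnKC ?(leq_trans le_k ka) ?(leq_trans le_k kb).
Qed.

Lemma llce_shift (S : seq T) a b d : a + d <= size S -> b + d <= size S ->
  take d (drop a S) = take d (drop b S) -> llce S (a + d) (b + d) = d + llce S a b.
Proof.
move=> le_a le_b Eab; rewrite /llce !takeD Eab !rev_cat lcp_cat2l size_rev.
by rewrite size_takel // size_drop; lia.
Qed.

End LongestCommonPrefix.

Section NextSmallerSuffix.
Context {disp : Order.disp_t} {T : orderType disp}.
Variable S : seq T.

Lemma drop_suf p g : 0 < p -> drop g (suf S p) = suf S (p + g).
Proof. by move=> p_gt0; rewrite /suf drop_drop; congr drop; lia. Qed.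

Lemma size_suf p : size (suf S p) = size S - p.-1.
Proof. exact: size_drop. Qed.

Lemma nss_gt p : p < nss S p.
Proof. by rewrite /nss addSn ltnS leq_addr. Qed.

Lemma nss_leq p : p <= size S -> nss S p <= (size S).+1.
Proof.
move=> le_p; have := find_size (fun k => suf_gt S p (p.+1 + k)) (iota 0 (size S - p)).
by rewrite size_iota /nss; lia.
Qed.

Lemma nss_next_smaller_suffix p : 0 < p -> nss S p <= size S ->
  next_smaller_suffix (suf S p) (nss S p - p).
Proof.
rewrite /nss; case: findP => [_|k + found_k before_k]; rewrite size_iota.
  by move=> p_gt0 le_n; exfalso; lia.
move=> lt_k p_gt0 _.
have -> : p.+1 + k - p = k.+1 by lia.
split=> [|g /andP[g_gt0 g_le]].
  have := found_k 0; rewrite nth_iota // drop_suf //.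
  by have -> : p + k.+1 = p.+1 + (0 + k) by lia.
have := before_k 0 g.-1 ltac:(lia); rewrite nth_iota ?add0n; last by lia.
rewrite drop_suf // /suf_gt => /negbT; rewrite -leNgt.
by have -> : p.+1 + g.-1 = p + g by lia.
Qed.

Lemma nss_eq p k : 0 < p -> p < k <= size S ->
  next_smaller_suffix (suf S p) (k - p) -> nss S p = k.
Proof.
move=> p_gt0 /andP[lt_pk le_k] [lt_k min_k]; rewrite /nss.
have found_k : suf_gt S p (p.+1 + (k - p.+1)).
  by rewrite /suf_gt (_ : p.+1 + _ = p + (k - p)) -?drop_suf //; lia.
case: findP => [/hasPn notfound | f lt_f found_f before_f].
  have := notfound (k - p.+1); rewrite mem_iota found_k; lia.
move: lt_f; rewrite size_iota => lt_f.
case: (ltngtP f (k - p.+1)) => [lt_fk|lt_kf|->]; last by lia.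
  have := min_k f.+1 ltac:(lia); rewrite drop_suf // leNgt.
  by have := found_f 0; rewrite nth_iota // add0n /suf_gt addSnnS => ->.
by have := before_f 0 _ lt_kf; rewrite nth_iota ?add0n ?found_k //; lia.
Qed.

End NextSmallerSuffix.

Theorem lemma11 (disp : Order.disp_t) (T : orderType disp) (S : seq T) (i : nat) :
  1 <= i <= size S ->
  nss S i != (size S).+1 ->
  nss S i - i < llce S i (nss S i) ->
  llce S (i - (nss S i - i)) i = llce S i (nss S i) - (nss S i - i) /\
  nss S (i - (nss S i - i)) = i.
Proof.
move=> /andP[i_gt0 le_i].
have := nss_next_smaller_suffix (S := S) i_gt0; have := nss_leq le_i; have := nss_gt S i.
move: (nss S i) => j lt_ij le_j1 nss_i neq_j.
have le_j : j <= size S by rewrite -ltnS ltn_neqAle neq_j.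
move Ed : (j - i) => d lt_d; rewrite Ed in nss_i.
have := llce_leq le_i le_j; rewrite leq_min => /andP[le_L _].
have i'_gt0 : 0 < i - d by lia.
have [Ei Ej jd] : [/\ i - d + d = i, i + d = j & j - d = i] by split; lia.
have common_block k : k <= d.+1 -> take k (drop (i - k) S) = take k (drop (j - k) S).
  by move=> le_k; apply: llce_common_block => //; apply: leq_trans lt_d.
split.
  have := common_block d (leqnSn d); rewrite jd => /llce_shift.
  by rewrite Ei Ej => -> //; rewrite addKn.
set u := take d (suf S (i - d)).
have size_u : size u = d by rewrite size_takel // size_suf; lia.
have take_suf_i : take d (suf S i) = u.
  have := common_block d.+1 (leqnn _); rewrite !subnS jd => E2.
  by rewrite /u /suf -(take_takel _ (leqnSn d)) -E2 take_takel.
have suf_i' : suf S (i - d) = u ++ suf S i.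
  by rewrite -[LHS](cat_take_drop d) drop_suf // Ei.
have suf_i : suf S i = u ++ suf S j.
  by rewrite -[LHS](cat_take_drop d) drop_suf // Ej take_suf_i.
apply: nss_eq => //; first by lia.
have -> : i - (i - d) = d by lia.
move/(_ le_j): nss_i; rewrite suf_i' suf_i -size_u.
exact: next_smaller_suffix_square.
Qed.
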